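(* For integers $k\ge1$ and $n\ge1$, let $c(k,n)$ be the minimum, over all deterministic algorithms that sort $n$ elements in the rank query model in $k$ rounds, of the maximum over inputs of the total number of queries asked. Then $$c(k,n)\ \ge\ \frac{k}{2e}\,n^{1+1/k}-kn.$$
   Context: Rank query model for sorting: there are $n$ items $x_1,\ldots,x_n$ whose ranks $\mathrm{rank}(x_1),\ldots,\mathrm{rank}(x_n)$ form an unknown permutation of $\{1,\ldots,n\}$. A query is a pair $(i,m)$ with $i,m\in\{1,\ldots,n\}$ and asks ''How is $\mathrm{rank}(x_i)$ compared to $m$?'', with answer ''$<$'', ''$=$'' or ''$>$''. Sorting means determining the rank of every item. An algorithm runs in $k$ rounds if in each of $k$ rounds it submits a set of queries chosen depending only on answers of earlier rounds, then receives all their answers. *)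

From mathcomp Require Import all_boot all_fingroup.
From Stdlib Require Import Reals.
Set Implicit Arguments. Unset Strict Implicit. Unset Printing Implicit Defensive.

(* Ranks are encoded 0..n-1 (rank r+1 on paper <-> r : 'I_n), and a query
   threshold m in {1..n} likewise as m-1 : 'I_n. *)

Inductive cmp := ALt | AEq | AGt.

(* A query (i, m): "how is rank(x_i) compared to m?" *)
Definition query (n : nat) := ('I_n * 'I_n)%type.

Definition answer (n : nat) (p : {perm 'I_n}) (q : query n) : cmp :=
  let r := p q.1 in
  if (r < q.2)%N then ALt else if r == q.2 then AEq else AGt.

Definition transcript_t (n : nat) := seq (query n * cmp).

Record algo (n : nat) := Algo {
  alg_round : nat -> transcript_t n -> {set query n};
  alg_out   : transcript_t n -> {perm 'I_n} }.

Fixpoint run (n : nat) (A : algo n) (p : {perm 'I_n}) (j : nat) : transcript_t n :=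
  match j with
  | 0 => [::]
  | j'.+1 => let t := run A p j' in
             t ++ [seq (q, answer p q) | q <- enum (alg_round A j' t)]
  end.

Fixpoint cost (n : nat) (A : algo n) (p : {perm 'I_n}) (j : nat) : nat :=
  match j with
  | 0 => 0
  | j'.+1 => cost A p j' + #|alg_round A j' (run A p j')|
  end.

Definition sorts_in (n : nat) (A : algo n) (k : nat) : Prop :=
  forall p : {perm 'I_n}, alg_out A (run A p k) = p.

(* A k-round sorting algorithm recovers the input from its transcript.  In
   round l the answers about item i depend only on how many of its queried
   thresholds lie below its rank and on whether the rank is itself a
   threshold, which leaves at most 2 (d_{l,i} + 1) possibilities when d_{l,i}
   queries concern i.  The queries of a round depend only on earlier answers,
   so counting along the decision tree gives an input with
   n! <= prod_{l,i} 2 (d_{l,i} + 1).  The bound x <= lam exp (x / lam - 1),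
   with lam = n^(1/k) / e, turns this product into an exponential of the
   total cost, and n^n <= e^n n! concludes. *)

From mathcomp Require Import all_boot all_fingroup zify.
From Stdlib Require Import Reals Lra.
Set Implicit Arguments. Unset Strict Implicit. Unset Printing Implicit Defensive.

Section AdaptiveCode.

Variables (X K : finType) (k : nat) (code : X -> nat -> K) (choices : nat -> X -> {set K}).

Definition codes_agree j x y := forall l, l < j -> code x l = code y l.

Hypothesis choices_agree : forall j x y, codes_agree j x y -> choices j x = choices j y.
Hypothesis code_in_choices : forall j x, j < k -> code x j \in choices j x.
Hypothesis code_inj : forall x y, codes_agree k x y -> x = y.

Let bound j x := \prod_(j <= l < k) #|choices l x|.

Lemma card_le_bigmax_bound j (S : {set X}) x0 :
  j <= k -> x0 \in S -> {in S, forall x, codes_agree j x x0} ->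
  #|S| <= \max_(x in S) bound j x.
Proof.
move Ht: (k - j) => t; elim: t j S x0 Ht => [|t IH] j S x0 Ht le_jk S_x0 agreeS.
  have eq_jk : j = k by lia.
  apply: (@leq_trans 1); last first.
    by apply: leq_trans (leq_bigmax_cond _ S_x0); rewrite /bound eq_jk big_geq.
  rewrite -(cards1 x0) subset_leq_card //; apply/subsetP => x Sx.
  by rewrite inE; apply/eqP/code_inj; rewrite -eq_jk; apply: agreeS.
have lt_jk : j < k by lia.
pose part c := [set x in S | code x j == c].
pose M := \max_(x in S) bound j.+1 x.
have card_part c : #|part c| <= M.
  have [-> | [y]] := set_0Vmem (part c); first by rewrite cards0.
  rewrite inE => /andP [Sy /eqP yj].
  apply: leq_trans (IH j.+1 (part c) y _ _ _ _) _ => //; first by lia.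
  - by rewrite inE Sy yj eqxx.
  - move=> x; rewrite inE => /andP [Sx /eqP xj] l.
    rewrite ltnS leq_eqVlt => /orP [/eqP -> | lt_lj]; first by rewrite xj yj.
    by rewrite (agreeS x Sx l lt_lj) (agreeS y Sy l lt_lj).
  apply/bigmax_leqP => x; rewrite inE => /andP [Sx _]; exact: leq_bigmax_cond.
have card_S : #|S| <= #|choices j x0| * M.
  rewrite -sum1_card (partition_big (fun x => code x j) (mem (choices j x0))) /=; last first.
    by move=> x Sx; rewrite -(choices_agree (agreeS x Sx)) code_in_choices.
  by rewrite -sum_nat_const leq_sum // => c _; rewrite sum1dep_card; apply: card_part.
have [|xm Sxm defM] := @eq_bigmax_cond _ (mem S) (bound j.+1); first by apply/card_gt0P; exists x0.
apply: leq_trans card_S (leq_trans _ (leq_bigmax_cond _ Sxm)).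
rewrite /M defM /bound (big_ltn lt_jk) (choices_agree (y := xm)) //.
by move=> l lt_lj; rewrite (agreeS xm Sxm l lt_lj).
Qed.

Lemma exists_card_le_prod_choices (x0 : X) :
  exists x, #|X| <= \prod_(l < k) #|choices l x|.
Proof.
have [|x _ defM] := @eq_bigmax_cond _ (mem [set: X]) (bound 0).
  by rewrite cardsT; apply/card_gt0P; exists x0.
exists x; have := @card_le_bigmax_bound 0 [set: X] x0 (leq0n k) (in_setT x0).
by rewrite defM cardsT /bound big_mkord; apply.
Qed.

End AdaptiveCode.

Definition compare_rank n (r m : 'I_n) : cmp :=
  if r < m then ALt else if r == m then AEq else AGt.

Lemma answerE n (p : {perm 'I_n}) (q : query n) : answer p q = compare_rank (p q.1) q.2.
Proof. by []. Qed.

Lemma compare_rank_thresholds n (T : {set 'I_n}) (r r' : 'I_n) :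
  #|[set m in T | m < r]| = #|[set m in T | m < r']| -> (r \in T) = (r' \in T) ->
  {in T, forall m, compare_rank r m = compare_rank r' m}.
Proof.
wlog le_rr' : r r' / r <= r'.
  move=> wlog_le eq_below eq_in m Tm; case: (leqP r r') => [le_rr' | /ltnW le_r'r].
    exact: wlog_le.
  by rewrite (wlog_le r' r).
move=> eq_below eq_in.
have no_between m : m \in T -> r <= m -> m < r' -> False.
  move=> Tm le_rm lt_mr'.
  have /eqP eq_sets : [set m in T | m < r] == [set m in T | m < r'].
    rewrite eqEcard eq_below leqnn andbT; apply/subsetP => x.
    by rewrite !inE => /andP [-> lt_xr]; apply: leq_trans le_rr'.
  have : m \in [set m in T | m < r'] by rewrite inE Tm.
  by rewrite -eq_sets inE ltnNge le_rm andbF.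
have [-> // | neq_rr'] := eqVneq r r'.
have lt_rr' : r < r' by rewrite ltn_neqAle neq_rr' le_rr'.
have rNT : r \notin T by apply/negP => Tr; apply: no_between Tr _ lt_rr'.
move=> m Tm.
have outside : (m < r) || (r' <= m).
  by case: (ltnP m r) => //= le_rm; rewrite leqNgt; apply/negP; apply: no_between.
have neq_mr : m != r by apply: contraNneq rNT => <-.
have neq_mr' : m != r' by apply: contraNneq rNT; rewrite eq_in => <-.
rewrite /compare_rank !(eq_sym _ m) (negbTE neq_mr) (negbTE neq_mr').
by move: neq_mr neq_mr'; rewrite -!val_eqE /= => *; have -> : (r < m) = (r' < m) by lia.
Qed.

Lemma card_fst_le N d : #|[pred y : 'I_N * bool | y.1 <= d]| <= d.+1 * 2.
Proof.
rewrite (eq_card (B := setX [set a : 'I_N | a <= d] [set: bool])); last first.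
  by move=> y; rewrite !inE andbT.
rewrite cardsX cardsT card_bool leq_mul2r /=.
apply: (@leq_trans #|'I_d.+1|); last by rewrite card_ord.
apply: (@leq_card_in _ _ (fun a : 'I_N => inord a)) => a b; rewrite !inE => le_ad le_bd.
by move/(congr1 (@nat_of_ord _)); rewrite !inordK //; apply: val_inj.
Qed.

Definition thresholds n (Q : {set query n}) (i : 'I_n) : {set 'I_n} :=
  [set m | (i, m) \in Q].

Lemma card_queries_sum n (Q : {set query n}) : #|Q| = \sum_i #|thresholds Q i|.
Proof.
rewrite -sum1_card big_mkcond (eq_bigr (fun i => \sum_m ((i, m) \in Q : nat))); last first.
  by move=> i _; rewrite -sum1_card big_mkcond /=; apply: eq_bigr => m _; rewrite inE; case: ifP.
by rewrite pair_bigA; apply: eq_bigr => -[i m] _ /=; case: ifP.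
Qed.

Section RoundCode.

Variables (n : nat) (A : algo n).

Definition round_queries (p : {perm 'I_n}) (l : nat) := alg_round A l (run A p l).

Definition round_code (p : {perm 'I_n}) l : {ffun 'I_n -> 'I_n.+1 * bool} :=
  [ffun i => let T := thresholds (round_queries p l) i in
             (inord #|[set m in T | m < p i]|, p i \in T)].

Definition round_choices (l : nat) (p : {perm 'I_n}) : {set {ffun 'I_n -> 'I_n.+1 * bool}} :=
  [set f : {ffun 'I_n -> 'I_n.+1 * bool} |
    [forall i, (f i).1 <= #|thresholds (round_queries p l) i|]].

Lemma run_eq_of_codes_agree j p p' :
  codes_agree round_code j p p' -> run A p j = run A p' j.
Proof.
elim: j => [|j IH] agree_pp' //=.
have run_eq : run A p j = run A p' j.
  by apply: IH => l lt_lj; apply: agree_pp'; apply: ltnW.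
rewrite -run_eq; congr (_ ++ _); apply/eq_in_map => q; rewrite mem_enum => Qq.
congr (_, _); rewrite !answerE.
have := congr1 (fun f : {ffun _ -> _} => f q.1) (agree_pp' j (ltnSn j)).
rewrite !ffunE /round_queries -run_eq => -[eq_below eq_in].
apply: (compare_rank_thresholds _ eq_in).
  move/(congr1 (@nat_of_ord _)): eq_below.
  by rewrite !inordK // ltnS (leq_trans (max_card _)) ?card_ord.
by rewrite inE -surjective_pairing.
Qed.

Lemma round_choices_agree j p p' :
  codes_agree round_code j p p' -> round_choices j p = round_choices j p'.
Proof. by move/run_eq_of_codes_agree; rewrite /round_choices /round_queries => ->. Qed.

Lemma round_code_in_choices j p : round_code p j \in round_choices j p.
Proof.
rewrite inE; apply/forallP => i; rewrite ffunE /= inordK.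
  by apply: subset_leq_card; apply/subsetP => m; rewrite inE => /andP [].
by rewrite ltnS (leq_trans (max_card _)) ?card_ord.
Qed.

Lemma round_code_inj k : sorts_in A k ->
  forall p p', codes_agree round_code k p p' -> p = p'.
Proof. by move=> sorts p p' /run_eq_of_codes_agree eq_run; rewrite -(sorts p) eq_run sorts. Qed.

Lemma card_round_choices l p :
  #|round_choices l p| <= \prod_i (#|thresholds (round_queries p l) i|.+1 * 2).
Proof.
pose F i := [pred y : 'I_n.+1 * bool | y.1 <= #|thresholds (round_queries p l) i|].
rewrite (eq_card (B := finfun.family F)); last first.
  by move=> f; rewrite inE; apply/forallP/familyP => le_f i; have := le_f i; rewrite inE.
rewrite card_family foldrE big_map big_enum /=.
by apply: leq_prod => i _; apply: card_fst_le.
Qed.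

Lemma cost_eq_sum p k : cost A p k = \sum_(l < k) #|round_queries p l|.
Proof. by elim: k => [|k IH]; rewrite ?big_ord0 // big_ord_recr /= IH. Qed.

End RoundCode.

Section RealBounds.

Local Open Scope R_scope.

Lemma exp_pow (x : R) m : exp x ^ m = exp (INR m * x).
Proof.
elim: m => [|m IH]; first by rewrite Rmult_0_l exp_0.
by rewrite -tech_pow_Rmult IH S_INR -exp_plus; congr exp; ring.
Qed.

Lemma le_exp_sub1 (x : R) : x <= exp (x - 1).
Proof. by have := exp_ineq1_le (x - 1); lra. Qed.

Lemma prod_le_pow_exp_sum (I : Type) (r : seq I) (f : I -> nat) (lam : R) : 0 < lam ->
  INR (\prod_(i <- r) f i) <= lam ^ size r * exp (INR (\sum_(i <- r) f i) / lam - INR (size r)).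
Proof.
move=> lam_gt0; elim: r => [|i r IH].
  by rewrite !big_nil /= Rdiv_0_l Rminus_0_r exp_0; lra.
have le_fi : INR (f i) <= lam * exp (INR (f i) / lam - 1).
  apply: Rle_trans (Rmult_le_compat_l _ _ _ (Rlt_le _ _ lam_gt0) (le_exp_sub1 _)).
  by right; field; lra.
rewrite !big_cons mult_INR [size _]/=.
apply: Rle_trans (Rmult_le_compat _ _ _ _ (pos_INR _) (pos_INR _) le_fi IH) (Req_le _ _ _).
rewrite plus_INR S_INR.
have -> : (INR (f i) + INR (\sum_(j <- r) f j)) / lam - (INR (size r) + 1) =
          (INR (f i) / lam - 1) + (INR (\sum_(j <- r) f j) / lam - INR (size r)) by field; lra.
by rewrite exp_plus -tech_pow_Rmult; ring.
Qed.

Lemma succ_pow_le_exp_mul_pow m : INR m.+1 ^ m <= exp 1 * INR m ^ m.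
Proof.
case: m => [|m]; first by have := exp_ineq1_le 1; rewrite /=; lra.
have m_gt0 : 0 < INR m.+1 by apply: lt_0_INR; apply/ltP.
have -> : INR m.+2 = INR m.+1 * (1 + / INR m.+1) by rewrite (S_INR m.+1); field; lra.
have -> : exp 1 = exp (/ INR m.+1) ^ m.+1 by rewrite exp_pow; congr exp; field; lra.
rewrite Rpow_mult_distr Rmult_comm; apply: Rmult_le_compat_r; first by apply: pow_le; lra.
apply: pow_incr; split; last exact: exp_ineq1_le.
by have := Rinv_0_lt_compat _ m_gt0; lra.
Qed.

Lemma pow_le_exp_mul_fact m : INR m ^ m <= exp (INR m) * INR m`!.
Proof.
elim: m => [|m IH]; first by rewrite /= exp_0; lra.
rewrite factS mult_INR -tech_pow_Rmult S_INR exp_plus -S_INR.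
have le_succ := succ_pow_le_exp_mul_pow m.
have m_ge0 := pos_INR m.+1.
have exp1_gt0 := exp_pos 1.
apply: (Rle_trans _ (INR m.+1 * (exp 1 * (exp (INR m) * INR m`!)))); last by right; ring.
apply: Rmult_le_compat_l => //; apply: Rle_trans le_succ _.
exact: Rmult_le_compat_l (Rlt_le _ _ exp1_gt0) IH.
Qed.

Lemma prod_succ_double_le_pow_exp (I : finType) (d : I -> nat) (lam : R) : 0 < lam ->
  INR (\prod_i ((d i).+1 * 2)) <=
  lam ^ #|I| * exp (INR ((\sum_i d i + #|I|) * 2) / lam - INR #|I|).
Proof.
move=> lam_gt0; have := prod_le_pow_exp_sum (index_enum I) (fun i => (d i).+1 * 2)%nat lam_gt0.
have -> : size (index_enum I) = #|I| by rewrite /index_enum unlock -enumT -cardT.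
have -> : (\sum_i ((d i).+1 * 2) = (\sum_i d i + #|I|) * 2)%nat.
  rewrite -big_distrl (eq_bigr (fun i => d i + 1)%nat) => [|i _]; last by rewrite addn1.
  by rewrite big_split sum_nat_const muln1.
by [].
Qed.

Lemma cost_lower_bound k n (d : 'I_k * 'I_n -> nat) : (0 < k)%nat -> (0 < n)%nat ->
  (n`! <= \prod_x ((d x).+1 * 2))%nat ->
  INR k / (2 * exp 1) * Rpower (INR n) (1 + / INR k) - INR k * INR n <= INR (\sum_x d x).
Proof.
move=> k_gt0 n_gt0 le_fact.
set K := INR k; set N := INR n; set D := INR (\sum_x d x).
have K_ge1 : 1 <= K by apply: (le_INR 1); apply/leP.
have N_ge1 : 1 <= N by apply: (le_INR 1); apply/leP.
pose lam := exp (ln N / K - 1).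
have lam_gt0 : 0 < lam by apply: exp_pos.
have amgm := prod_succ_double_le_pow_exp d lam_gt0.
have lam_pow : lam ^ (k * n) = exp (N * ln N - K * N).
  by rewrite exp_pow mult_INR; congr exp; rewrite -/K -/N; field; lra.
rewrite card_prod !card_ord lam_pow mult_INR plus_INR mult_INR -/K -/N -/D [INR 2]/= in amgm.
have N_pow : N ^ n = exp (N * ln N) by rewrite -{1}(exp_ln N) ?exp_pow //; lra.
have le_fact_R : INR n`! <= INR (\prod_x ((d x).+1 * 2)) by apply/le_INR/leP.
have le_exp : exp (N * ln N) <=
    exp (N + (N * ln N - K * N) + ((D + K * N) * (1 + 1) / lam - K * N)).
  rewrite (exp_plus (N + _)) (exp_plus N) -N_pow Rmult_assoc.
  apply: Rle_trans (pow_le_exp_mul_fact n) _.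
  exact: Rmult_le_compat_l (Rlt_le _ _ (exp_pos _)) (Rle_trans _ _ _ le_fact_R amgm).
have le_arg : N * ln N <= N + (N * ln N - K * N) + ((D + K * N) * (1 + 1) / lam - K * N).
  by apply: Rnot_lt_le => lt_arg; apply: (Rlt_not_le _ _ (exp_increasing _ _ lt_arg)).
have le_lam : K * N * lam <= (D + K * N) * 2.
  have le_div : K * N <= (D + K * N) * 2 / lam by nra.
  have := Rmult_le_compat_r _ _ _ (Rlt_le _ _ lam_gt0) le_div.
  by have -> : (D + K * N) * 2 / lam * lam = (D + K * N) * 2 by field; lra.
have -> : Rpower N (1 + / K) = N * exp 1 * lam.
  rewrite /Rpower /lam Rmult_plus_distr_r Rmult_1_l exp_plus exp_ln; last by lra.
  by rewrite Rmult_assoc -exp_plus; congr (_ * exp _); field; lra.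
have -> : K / (2 * exp 1) * (N * exp 1 * lam) = K * N * lam / 2.
  by field; have := exp_pos 1; lra.
lra.
Qed.

End RealBounds.

Theorem theorem6 (k n : nat) (hk : (1 <= k)%N) (hn : (1 <= n)%N)
  (A : algo n) (HA : sorts_in A k) :
  exists p : {perm 'I_n},
    (INR k / (2 * exp 1) * Rpower (INR n) (1 + / INR k) - INR k * INR n
       <= INR (cost A p k))%R.
Proof.
have [p le_perm] := exists_card_le_prod_choices (@round_choices_agree n A)
  (fun j p _ => round_code_in_choices A j p) (round_code_inj HA) 1%g.
exists p; pose d (x : 'I_k * 'I_n) := #|thresholds (round_queries A p x.1) x.2|.
have -> : cost A p k = \sum_x d x.
  rewrite cost_eq_sum -(pair_bigA _ (fun l i => d (l, i))).
  by apply: eq_bigr => l _; rewrite card_queries_sum.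
apply: cost_lower_bound => //; rewrite -card_Sn (leq_trans le_perm) //.
rewrite -(pair_bigA _ (fun l i => (d (l, i)).+1 * 2)).
by apply: leq_prod => l _; apply: card_round_choices.
Qed.
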